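(* Let $\tau\ge1$. If Weighted Majority Rule 1 selects $P$ over $Q$, then $SC(P)\le SC(Q)+2\,SC(Z)$ for every point $Z$ of the metric space.
   Context: Voters $N=\{1,\dots,n\}$ and candidates are points of an arbitrary metric space $(X,d)$. Voter $i$ prefers $P$ to $Q$ only if $d(i,P)\le d(i,Q)$, with preference strength $\alpha_i^{PQ}=d(i,Q)/d(i,P)\ge1$. $SC(Y)=\sum_{i\in N}d(i,Y)$ for any $Y\in X$. For candidates $P,Q$ and threshold $\tau$, let $A_2$ ($A_1$) be the voters preferring $P$ with strength $>\tau$ ($\le\tau$), and $B_2$ ($B_1$) those preferring $Q$ with strength $>\tau$ ($\le\tau$). Weighted Majority Rule 1: if $\tau\ge\sqrt2+1$, weight $\frac{\tau+1}{\tau-1}$ for strength $>\tau$ and weight $1$ for strength $\le\tau$; if $\tau<\sqrt2+1$, weight $\tau$ for strength $>\tau$ and weight $1$ for strength $\le\tau$. It selects $P$ over $Q$ when the total weight of voters preferring $P$ is at least that of voters preferring $Q$. *)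

From Stdlib Require Import Reals Lra List.
Import ListNotations.
Open Scope R_scope.

Definition is_metric {X : Type} (d : X -> X -> R) : Prop :=
  (forall x y, 0 <= d x y) /\
  (forall x y, d x y = 0 <-> x = y) /\
  (forall x y, d x y = d y x) /\
  (forall x y z, d x z <= d x y + d y z).

Definition rsum (n : nat) (f : nat -> R) : R :=
  fold_right Rplus 0 (map f (seq 0 n)).

Definition SC {X : Type} (d : X -> X -> R) (n : nat) (v : nat -> X) (Y : X) : R :=
  rsum n (fun i => d (v i) Y).

Definition wmr1_heavy (tau : R) : R :=
  if Rle_dec (sqrt 2 + 1) tau then (tau + 1) / (tau - 1) else tau.

(* Strength of preference for A over B is d(x,B)/d(x,A); "strength > tau"
   is encoded as tau*d(x,A) < d(x,B) (no division), so d(x,A)=0<d(x,B)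
   counts as infinite strength and d(x,A)=d(x,B)=0 as strength 1 <= tau. *)
Definition wmr1_weight {X : Type} (d : X -> X -> R) (tau : R) (x A B : X) : R :=
  if Rlt_dec (tau * d x A) (d x B) then wmr1_heavy tau else 1.

(* pref i = true : voter i prefers P; false : voter i prefers Q. *)
Definition weightP {X : Type} (d : X -> X -> R) (tau : R) (n : nat)
  (v : nat -> X) (pref : nat -> bool) (P Q : X) : R :=
  rsum n (fun i => if pref i then wmr1_weight d tau (v i) P Q else 0).

Definition weightQ {X : Type} (d : X -> X -> R) (tau : R) (n : nat)
  (v : nat -> X) (pref : nat -> bool) (P Q : X) : R :=
  rsum n (fun i => if pref i then 0 else wmr1_weight d tau (v i) Q P).

Definition wmr1_selects {X : Type} (d : X -> X -> R) (tau : R) (n : nat)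
  (v : nat -> X) (pref : nat -> bool) (P Q : X) : Prop :=
  weightP d tau n v pref P Q >= weightQ d tau n v pref P Q.

(* Write p = d(Z,P), q = d(Z,Q) and, for voter i, g_i = d(i,P) - d(i,Q) - 2 d(i,Z),
   so that SC(P) - SC(Q) - 2 SC(Z) is the sum of the g_i.  By the triangle
   inequality (d(i,P), d(i,Q)) lies within d(i,Z) of (p, q), and a case analysis
   on the class of a voter (prefers P or Q, strength above or below tau) yields a
   single K >= 0, depending only on tau, p and q, such that g_i <= - K w_i for the
   supporters of P and g_i <= K w_i for the supporters of Q, w_i being the weight
   of the vote.  Summing, the sum of the g_i is at most K (W_Q - W_P) <= 0.
   K = 0 works when p <= q; otherwise take K = max ((p - q) / h, c), where h is
   the heavy weight and c bounds g_i on the light supporters of Q.  What makes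
   the heavy supporters of P fit is h <= 3, which both branches of the rule meet. *)

From Stdlib Require Import Reals Lra Lia Psatz List.
Open Scope R_scope.

Lemma rsum_le (n : nat) (f g : nat -> R) :
  (forall i, (i < n)%nat -> f i <= g i) -> rsum n f <= rsum n g.
Proof.
  unfold rsum; intros Hfg.
  assert (Hin : forall i, In i (seq 0 n) -> f i <= g i)
    by (intros i Hi; apply in_seq in Hi; apply Hfg; lia).
  induction (seq 0 n) as [|i s IH]; simpl in *; [lra|].
  apply Rplus_le_compat; auto.
Qed.

Lemma rsum_minus (n : nat) (f g : nat -> R) :
  rsum n (fun i => f i - g i) = rsum n f - rsum n g.
Proof. unfold rsum; induction (seq 0 n); simpl; lra. Qed.

Lemma rsum_scal (n : nat) (c : R) (f : nat -> R) :
  rsum n (fun i => c * f i) = c * rsum n f.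
Proof. unfold rsum; induction (seq 0 n); simpl; lra. Qed.

Lemma rsum_nonpos_of_certificate (n : nat) (pref : nat -> bool)
  (g wP wQ : nat -> R) (K : R) :
  0 <= K ->
  (forall i, (i < n)%nat -> pref i = true -> g i <= - K * wP i) ->
  (forall i, (i < n)%nat -> pref i = false -> g i <= K * wQ i) ->
  rsum n (fun i => if pref i then 0 else wQ i) <=
    rsum n (fun i => if pref i then wP i else 0) ->
  rsum n g <= 0.
Proof.
  intros HK HP HQ Hwin.
  apply Rle_trans with
    (rsum n (fun i => K * ((if pref i then 0 else wQ i) - (if pref i then wP i else 0)))).
  - apply rsum_le; intros i Hi.
    destruct (pref i) eqn:E; [specialize (HP i Hi E) | specialize (HQ i Hi E)]; lra.
  - rewrite rsum_scal, rsum_minus.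
    nra.
Qed.

Lemma SC_gap {X : Type} (d : X -> X -> R) (n : nat) (v : nat -> X) (P Q Z : X) :
  SC d n v P - SC d n v Q - 2 * SC d n v Z =
  rsum n (fun i => d (v i) P - d (v i) Q - 2 * d (v i) Z).
Proof. unfold SC; rewrite !rsum_minus, rsum_scal; reflexivity. Qed.

Lemma sqrt2_bounds : 1 < sqrt 2 < 2.
Proof.
  assert (Hs : sqrt 2 * sqrt 2 = 2) by (apply sqrt_sqrt; lra).
  pose proof Rlt_sqrt2_0; split; nra.
Qed.

Lemma wmr1_heavy_cases (tau : R) :
  (sqrt 2 + 1 <= tau /\ wmr1_heavy tau * (tau - 1) = tau + 1) \/
  (tau < sqrt 2 + 1 /\ wmr1_heavy tau = tau).
Proof.
  pose proof sqrt2_bounds.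
  unfold wmr1_heavy; destruct (Rle_dec (sqrt 2 + 1) tau) as [Ht|Ht]; [left|right].
  - split; [exact Ht | field; lra].
  - split; [lra | reflexivity].
Qed.

Lemma wmr1_heavy_ge1 (tau : R) : 1 <= tau -> 1 <= wmr1_heavy tau.
Proof. pose proof sqrt2_bounds; destruct (wmr1_heavy_cases tau); nra. Qed.

Lemma wmr1_heavy_le3 (tau : R) : 1 <= tau -> wmr1_heavy tau <= 3.
Proof. pose proof sqrt2_bounds; destruct (wmr1_heavy_cases tau); nra. Qed.

Lemma wmr1_heavy_le2 (tau : R) : 3 <= tau -> wmr1_heavy tau <= 2.
Proof. pose proof sqrt2_bounds; destruct (wmr1_heavy_cases tau); nra. Qed.

(* [wmr1_weight d tau x A B] is convertible to [strength_weight tau (d x A) (d x B)]. *)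
Definition strength_weight (tau a b : R) : R :=
  if Rlt_dec (tau * a) b then wmr1_heavy tau else 1.

Definition light_cap (tau p q : R) : R :=
  ((3 * tau - 1) * q - (3 - tau) * p) / (1 + tau).

Lemma light_cap_mul (tau p q : R) : 1 <= tau ->
  (1 + tau) * light_cap tau p q = (3 * tau - 1) * q - (3 - tau) * p.
Proof. intros; unfold light_cap; field; lra. Qed.

(* For tau >= 3 the triangle bound p - q is already good enough. *)
Definition gap_cap (tau p q : R) : R :=
  if Rlt_dec tau 3 then Rmin (p - q) (light_cap tau p q) else p - q.

Lemma gap_cap_le (tau p q : R) : gap_cap tau p q <= p - q.
Proof. unfold gap_cap; destruct (Rlt_dec tau 3); [apply Rmin_l | lra]. Qed.

(* Note p - q <= light_cap tau p q exactly when p <= tau q. *)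
Lemma heavy_mul_cap_le (tau h p q : R) :
  1 <= tau < 3 -> 0 <= h <= 3 -> 0 <= q <= p ->
  (1 + tau) * (h * Rmin (p - q) (light_cap tau p q)) <=
    (3 * tau - 1) * p - (3 - tau) * q.
Proof.
  intros Ht Hh Hq.
  pose proof (light_cap_mul tau p q ltac:(lra)) as HL.
  unfold Rmin; destruct (Rle_dec (p - q) (light_cap tau p q)) as [Hle|Hlt].
  - assert (Hp : p <= tau * q) by nra.
    assert (h * (p - q) <= 3 * (p - q)) by (apply Rmult_le_compat_r; lra).
    nra.
  - assert (Hp : tau * q <= p) by nra.
    replace ((1 + tau) * (h * light_cap tau p q))
      with (h * ((1 + tau) * light_cap tau p q)) by ring.
    rewrite HL.
    destruct (Rle_dec 0 ((3 * tau - 1) * q - (3 - tau) * p)).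
    + assert (h * ((3 * tau - 1) * q - (3 - tau) * p) <=
              3 * ((3 * tau - 1) * q - (3 - tau) * p))
        by (apply Rmult_le_compat_r; lra).
      nra.
    + assert (h * ((3 * tau - 1) * q - (3 - tau) * p) <= 0) by nra.
      nra.
Qed.

Section VoterGap.

Variables tau p q a b z : R.
Hypothesis tau_ge1 : 1 <= tau.
Hypotheses (a_ge0 : 0 <= a) (q_ge0 : 0 <= q).
Hypotheses (a_le : a <= z + p) (p_le : p <= a + z) (b_le : b <= z + q) (q_le : q <= b + z).

Lemma gap_le_diff : a - b - 2 * z <= p - q.
Proof. lra. Qed.

Lemma gap_le_diff_pref : a <= b -> a - b - 2 * z <= q - p.
Proof. lra. Qed.

Lemma gap_light_le_cap : b <= a -> a <= tau * b -> a - b - 2 * z <= gap_cap tau p q.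
Proof.
  intros Hba Hab; unfold gap_cap; destruct (Rlt_dec tau 3) as [Ht|]; [|lra].
  apply Rmin_glb; [lra|].
  apply Rmult_le_reg_l with (1 + tau); [lra|].
  rewrite light_cap_mul by lra.
  assert (0 <= (3 - tau) * (a + z - p)) by (apply Rmult_le_pos; lra).
  assert (0 <= (3 * tau - 1) * (z + q - b)) by (apply Rmult_le_pos; lra).
  nra.
Qed.

Lemma gap_heavy_le_cap : q <= p -> tau * a < b ->
  a - b - 2 * z <= - (wmr1_heavy tau * gap_cap tau p q).
Proof.
  intros Hqp Hab; unfold gap_cap; destruct (Rlt_dec tau 3) as [Ht|Ht].
  - (* (1 + tau) (b - a + 2 z) >= (3 tau - 1) p - (3 - tau) q >= (1 + tau) h cap *)
    assert (0 <= (3 * tau - 1) * (z + a - p)) by (apply Rmult_le_pos; lra).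
    assert (0 <= (3 - tau) * (z + q - b)) by (apply Rmult_le_pos; lra).
    pose proof (wmr1_heavy_ge1 tau tau_ge1); pose proof (wmr1_heavy_le3 tau tau_ge1).
    pose proof (heavy_mul_cap_le tau (wmr1_heavy tau) p q
                  ltac:(lra) ltac:(lra) ltac:(lra)).
    apply Rmult_le_reg_l with (1 + tau); [lra|].
    nra.
  - pose proof (wmr1_heavy_le2 tau ltac:(lra)).
    assert (wmr1_heavy tau * (p - q) <= 2 * (p - q)) by (apply Rmult_le_compat_r; lra).
    assert (3 * a <= tau * a) by (apply Rmult_le_compat_r; lra).
    lra.
Qed.

End VoterGap.

(* [a], [b], [z] stand for d(i,P), d(i,Q), d(i,Z) and [p], [q] for d(Z,P), d(Z,Q). *)
Definition gap_certificate (tau p q K : R) : Prop :=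
  forall a b z, 0 <= a ->
    a <= z + p -> p <= a + z -> b <= z + q -> q <= b + z ->
    (a <= b -> a - b - 2 * z <= - K * strength_weight tau a b) /\
    (b <= a -> a - b - 2 * z <= K * strength_weight tau b a).

Lemma gap_certificate_zero (tau p q : R) : p <= q -> gap_certificate tau p q 0.
Proof.
  intros Hpq a b z _ H1 _ _ H4.
  assert (a - b - 2 * z <= p - q) by (apply gap_le_diff; assumption).
  split; intros; rewrite ?Ropp_0, !Rmult_0_l; lra.
Qed.

Lemma gap_certificate_pos (tau p q : R) : 1 <= tau -> 0 <= q < p ->
  gap_certificate tau p q (Rmax ((p - q) / wmr1_heavy tau) (gap_cap tau p q)).
Proof.
  intros Ht Hq a b z Ha H1 H2 H3 H4.
  pose proof (wmr1_heavy_ge1 tau Ht) as Hh.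
  assert (Hdiv : wmr1_heavy tau * ((p - q) / wmr1_heavy tau) = p - q) by (field; lra).
  assert (Hdiv_le : (p - q) / wmr1_heavy tau <= p - q).
  { apply Rmult_le_reg_l with (wmr1_heavy tau); [lra|]. rewrite Hdiv. nra. }
  pose proof (gap_cap_le tau p q).
  assert (Hdiff : a - b - 2 * z <= p - q) by (apply gap_le_diff; assumption).
  unfold strength_weight, Rmax.
  destruct (Rle_dec ((p - q) / wmr1_heavy tau) (gap_cap tau p q)) as [Hc|Hc];
    split; intros Hab.
  - assert (a - b - 2 * z <= q - p) by (apply gap_le_diff_pref; assumption).
    destruct (Rlt_dec (tau * a) b); [|lra].
    assert (a - b - 2 * z <= - (wmr1_heavy tau * gap_cap tau p q))
      by (apply gap_heavy_le_cap; (assumption || lra)).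
    lra.
  - destruct (Rlt_dec (tau * b) a) as [|Hl]; [|apply Rnot_lt_le in Hl].
    + pose proof (Rmult_le_compat_l (wmr1_heavy tau) _ _ ltac:(lra) Hc); lra.
    + assert (a - b - 2 * z <= gap_cap tau p q)
        by (apply gap_light_le_cap; assumption).
      lra.
  - assert (a - b - 2 * z <= q - p) by (apply gap_le_diff_pref; assumption).
    destruct (Rlt_dec (tau * a) b); lra.
  - destruct (Rlt_dec (tau * b) a) as [|Hl]; [lra|].
    apply Rnot_lt_le in Hl.
    assert (a - b - 2 * z <= gap_cap tau p q)
      by (apply gap_light_le_cap; assumption).
    lra.
Qed.

Lemma gap_certificate_exists (tau p q : R) : 1 <= tau -> 0 <= q ->
  exists K, 0 <= K /\ gap_certificate tau p q K.
Proof.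
  intros Ht Hq.
  destruct (Rle_dec p q) as [Hpq|Hpq].
  - exists 0; split; [lra | exact (gap_certificate_zero tau p q Hpq)].
  - eexists; split; [| apply gap_certificate_pos; lra].
    eapply Rle_trans; [| apply Rmax_l].
    pose proof (wmr1_heavy_ge1 tau Ht).
    unfold Rdiv; apply Rmult_le_pos; [lra|].
    left; apply Rinv_0_lt_compat; lra.
Qed.

Lemma metric_gap_certificate {X : Type} (d : X -> X -> R) (tau K : R) (P Q Z x : X) :
  is_metric d -> gap_certificate tau (d Z P) (d Z Q) K ->
  (d x P <= d x Q ->
     d x P - d x Q - 2 * d x Z <= - K * wmr1_weight d tau x P Q) /\
  (d x Q <= d x P ->
     d x P - d x Q - 2 * d x Z <= K * wmr1_weight d tau x Q P).
Proof.
  intros [Hnn [_ [Hsym Htri]]] HK.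
  apply HK; try apply Hnn; try apply Htri;
    rewrite (Hsym x Z), Rplus_comm; apply Htri.
Qed.

Theorem mainTheorem5 (X : Type) (d : X -> X -> R) (hd : is_metric d)
  (n : nat) (v : nat -> X) (pref : nat -> bool) (P Q : X) (tau : R)
  (htau : 1 <= tau)
  (hprefP : forall i, (i < n)%nat -> pref i = true -> d (v i) P <= d (v i) Q)
  (hprefQ : forall i, (i < n)%nat -> pref i = false -> d (v i) Q <= d (v i) P)
  (hsel : wmr1_selects d tau n v pref P Q) :
  forall Z : X, SC d n v P <= SC d n v Q + 2 * SC d n v Z.
Proof.
  intros Z.
  destruct (gap_certificate_exists tau (d Z P) (d Z Q) htau)
    as [K [HK0 HK]]; [apply hd|].
  enough (SC d n v P - SC d n v Q - 2 * SC d n v Z <= 0) by lra.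
  rewrite SC_gap.
  apply (rsum_nonpos_of_certificate n pref _
           (fun i => wmr1_weight d tau (v i) P Q)
           (fun i => wmr1_weight d tau (v i) Q P) K HK0).
  - intros i Hi Hp; apply (metric_gap_certificate d tau K P Q Z (v i) hd HK); auto.
  - intros i Hi Hq; apply (metric_gap_certificate d tau K P Q Z (v i) hd HK); auto.
  - apply Rge_le, hsel.
Qed.
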